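(* Let $V$ be a vertex algebra. The following are equivalent: (1) there exists a $V$-module $W$ with $g(V)_{\ge0}W\ne W$; (2) $g(V)_{\ge0}V\ne V$; (3) $\mathbf 1\notin g(V)_{\ge0}V$.
   Context: $(V,Y,\mathbf 1)$ is a vertex algebra; a $V$-module is a module for $V$ as a vertex algebra (no grading assumed). For a $V$-module $W$, $g(V)_{\ge0}W=\mathrm{span}\{v_nw\mid v\in V,\ n\ge0,\ w\in W\}$, where $Y_W(v,x)=\sum_nv_nx^{-n-1}$; $V$ is regarded as a module over itself. *)

From mathcomp Require Import all_boot all_algebra all_reals.
From mathcomp Require Import complex.
Set Implicit Arguments. Unset Strict Implicit. Unset Printing Implicit Defensive.
Import GRing.Theory Num.Theory.
Local Open Scope ring_scope.

Definition binz (a : int) (i : nat) : int :=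
  match a with
  | Posz n => ('C(n, i))%:Z
  | Negz n => (-1) ^+ i * ('C(n + i, i))%:Z   (* Negz n = -(n+1) *)
  end.

Section VA.
Variable K : fieldType.

(* Borcherds (Jacobi) identity in component form, for YV the vertex operator
   of V (u_n v = YV n u v) and YW the action on W (u_n w = YW n u w):
   sum_{i>=0} binom(m,i) (u_{l+i} v)_{m+n-i} w
     = sum_{i>=0} (-1)^i binom(l,i) ( u_{l+m-i} v_{n+i} w
                                      - (-1)^l v_{l+n-i} u_{m+i} w ).
   The (finitely supported) series are truncated at any K0 beyond which all
   terms vanish. *)
Definition borcherds (V W : lmodType K)
    (YV : int -> V -> V -> V) (YW : int -> V -> W -> W) : Prop :=
  forall (u v : V) (w : W) (m n l : int) (K0 : nat),
    (forall i : nat, (K0 <= i)%N ->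
       [/\ YV (l + i%:Z) u v = 0, YW (n + i%:Z) v w = 0 & YW (m + i%:Z) u w = 0]) ->
    \sum_(i < K0) ((binz m i)%:~R *: YW (m + n - i%:Z) (YV (l + i%:Z) u v) w)
    = \sum_(i < K0) (((-1) ^+ i * (binz l i)%:~R) *:
          (YW (l + m - i%:Z) u (YW (n + i%:Z) v w)
           - ((-1 : K) ^ l) *: YW (l + n - i%:Z) v (YW (m + i%:Z) u w))).

Definition bilinear_modes (V W : lmodType K) (Y : int -> V -> W -> W) : Prop :=
  forall n : int,
    (forall (a : K) (u u' : V) (w : W), Y n (a *: u + u') w = a *: Y n u w + Y n u' w)
    /\ (forall (a : K) (u : V) (w w' : W), Y n u (a *: w + w') = a *: Y n u w + Y n u w').

Definition truncated (V W : lmodType K) (Y : int -> V -> W -> W) : Prop :=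
  forall (u : V) (w : W), exists N : int, forall n : int, N <= n -> Y n u w = 0.

(* A vertex algebra (V, Y, 1); Y(v,x) = sum_n v_n x^{-n-1}, v_n = va_Y n v. *)
Record vertex_algebra (V : lmodType K) := VertexAlgebra {
  va_Y : int -> V -> V -> V;
  va_vac : V;
  va_bilinear : bilinear_modes va_Y;
  va_truncation : truncated va_Y;
  va_vacuum : forall (n : int) (v : V), va_Y n va_vac v = (if n == -1 then v else 0);
  va_creation : forall v : V, va_Y (-1) v va_vac = v /\
                 (forall n : int, 0 <= n -> va_Y n v va_vac = 0);
  va_jacobi : borcherds va_Y va_Y
}.

Record va_module (V : lmodType K) (A : vertex_algebra V) (W : lmodType K) :=
  VAModule {
  mod_Y : int -> V -> W -> W;
  mod_bilinear : bilinear_modes mod_Y;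
  mod_truncation : truncated mod_Y;
  mod_vacuum : forall (n : int) (w : W), mod_Y n (va_vac A) w = (if n == -1 then w else 0);
  mod_jacobi : borcherds (va_Y A) mod_Y
}.

Definition in_gpos (V W : lmodType K) (Y : int -> V -> W -> W) (x : W) : Prop :=
  exists s : seq (K * int * V * W),
    all (fun t => 0 <= t.1.1.2) s /\
    x = \sum_(t <- s) (t.1.1.1 *: Y t.1.1.2 t.1.2 t.2).

End VA.

From mathcomp Require Import all_boot all_algebra all_reals.
From mathcomp Require Import complex.
From mathcomp Require Import zify.
Set Implicit Arguments. Unset Strict Implicit. Unset Printing Implicit Defensive.
Import GRing.Theory Num.Theory.
Local Open Scope ring_scope.

(* The only nontrivial implication is: if 1 lies in g(V)_{>=0} V then every
   w = 1_{-1} w of every module lies in g(V)_{>=0} W.  Since 1_{-1} is linear in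
   the vertex-algebra argument, it suffices that (u_n v)_k w lies in
   g(V)_{>=0} W for n >= 0.  The Borcherds identity with m so large that
   u_{m+i} w = 0 expresses (u_n v)_k w as a combination of the u_j v'_k' w with
   j = n + m - i >= 0 (binom(n,i) vanishes for i > n) and of the (u_{n+i} v)_* w
   with i > 0; the latter are handled by downward induction on n, which
   terminates since u_n v = 0 for n large. *)

Section SpanOfNonnegativeModes.
Variables (K : fieldType) (V W : lmodType K) (Y : int -> V -> W -> W).

Lemma in_gpos0 : in_gpos Y 0.
Proof. by exists [::]; rewrite big_nil. Qed.

Lemma in_gposD x y : in_gpos Y x -> in_gpos Y y -> in_gpos Y (x + y).
Proof.
move=> [s [s_ge0 ->]] [t [t_ge0 ->]]; exists (s ++ t).
by rewrite all_cat s_ge0 t_ge0 big_cat.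
Qed.

Lemma in_gposZ a x : in_gpos Y x -> in_gpos Y (a *: x).
Proof.
move=> [s [s_ge0 ->]]; exists [seq (a * t.1.1.1, t.1.1.2, t.1.2, t.2) | t <- s].
rewrite all_map big_map scaler_sumr; split; first exact: sub_all s_ge0.
by apply: eq_bigr => t _; rewrite scalerA.
Qed.

Lemma in_gposB x y : in_gpos Y x -> in_gpos Y y -> in_gpos Y (x - y).
Proof. by move=> gx gy; rewrite -scaleN1r; apply/in_gposD/in_gposZ. Qed.

Lemma in_gpos_sum (I : Type) (r : seq I) (P : pred I) (F : I -> W) :
  (forall i, P i -> in_gpos Y (F i)) -> in_gpos Y (\sum_(i <- r | P i) F i).
Proof.
by move=> gF; apply: (big_ind (in_gpos Y)) => //; [exact: in_gpos0 | exact: in_gposD].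
Qed.

Lemma in_gpos_mode n u w : 0 <= n -> in_gpos Y (Y n u w).
Proof.
move=> n_ge0; exists [:: (1, n, u, w)].
by rewrite /= n_ge0 big_seq1 scale1r.
Qed.

Hypothesis Y_bilinear : bilinear_modes Y.

Lemma modes0l n w : Y n 0 w = 0.
Proof.
have := (Y_bilinear n).1 1 0 0 w.
rewrite !scale1r addr0 => /eqP; rewrite eq_sym -subr_eq0 addrK.
by move/eqP.
Qed.

Lemma modes0r n u : Y n u 0 = 0.
Proof.
have := (Y_bilinear n).2 1 u 0 0.
rewrite !scale1r addr0 => /eqP; rewrite eq_sym -subr_eq0 addrK.
by move/eqP.
Qed.

Lemma modes_suml n w (I : Type) (r : seq I) (c : I -> K) (f : I -> V) :
  Y n (\sum_(i <- r) c i *: f i) w = \sum_(i <- r) c i *: Y n (f i) w.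
Proof.
elim: r => [|i r IHr]; first by rewrite !big_nil modes0l.
by rewrite !big_cons (Y_bilinear n).1 IHr.
Qed.

End SpanOfNonnegativeModes.

Section ModesOfNonnegativeModes.
Variables (K : fieldType) (V W : lmodType K) (A : vertex_algebra V).
Variable M : va_module A W.
Local Notation Y := (mod_Y M).
Local Notation YV := (va_Y A).

Lemma in_gpos_mode_mode_step u v (n : nat) :
    (forall (i : nat) k w, in_gpos Y (Y k (YV (n + i.+1)%N u v) w)) ->
  forall k w, in_gpos Y (Y k (YV n u v) w).
Proof.
move=> IHn k w.
have [Nuv Nuv_ok] := va_truncation A u v.
have [Nu Nu_ok] := mod_truncation M u w.
have [Nv Nv_ok] := mod_truncation M v w.
set m : int := `|Nu|%N; set p : int := k - m.
pose K0 := (`|Nuv - n| + `|Nv - p|).+1%N.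
have vanish (i : nat) : (K0 <= i)%N ->
    [/\ YV (n%:Z + i%:Z) u v = 0, Y (p + i%:Z) v w = 0 & Y (m + i%:Z) u w = 0].
  by move=> le_K0i; split; [apply: Nuv_ok | apply: Nv_ok | apply: Nu_ok]; lia.
have := mod_jacobi vanish.
have mp : m + p = k by rewrite /p addrC subrK.
rewrite big_ord_recl /= addr0 subr0 mp bin0 scale1r => jacobi.
rewrite (canRL (addrK _) jacobi); apply: in_gposB.
- apply: in_gpos_sum => i _; rewrite Nu_ok; last by lia.
  rewrite modes0r ?scaler0 ?subr0; last exact: mod_bilinear.
  have [le_in | lt_ni] := leqP i n.
    by apply/in_gposZ/in_gpos_mode; lia.
  by rewrite bin_small ?mulr0 ?scale0r //; exact: in_gpos0.
- by apply: in_gpos_sum => i _; apply/in_gposZ; rewrite -PoszD; apply: IHn.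
Qed.

Lemma in_gpos_mode_mode u v (n : nat) k w : in_gpos Y (Y k (YV n u v) w).
Proof.
have [N N_ok] := va_truncation A u v.
have [d le_d] : exists d : nat, N - n%:Z <= d by exists `|N - n|%N; lia.
elim: d n k w le_d => [|d IHd] n k w le_d; have [le_Nn | lt_nN] := lerP N n.
- by rewrite N_ok ?modes0l //; [exact: in_gpos0 | exact: mod_bilinear].
- lia.
- by rewrite N_ok ?modes0l //; [exact: in_gpos0 | exact: mod_bilinear].
- by apply: in_gpos_mode_mode_step => i k' w'; apply: IHd; lia.
Qed.

Lemma in_gpos_of_vacuum : in_gpos YV (va_vac A) -> forall w, in_gpos Y w.
Proof.
move=> [s [s_ge0 vac_span]] w.
have -> : w = Y (-1) (va_vac A) w by rewrite mod_vacuum.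
rewrite vac_span (modes_suml (mod_bilinear M)) big_seq.
apply: in_gpos_sum => t t_s.
have [n ->] : exists n : nat, t.1.1.2 = n.
  by exists `|t.1.1.2|%N; apply/esym/gez0_abs; exact: (allP s_ge0).
exact/in_gposZ/in_gpos_mode_mode.
Qed.

End ModesOfNonnegativeModes.

Definition va_self_module (K : fieldType) (V : lmodType K) (A : vertex_algebra V) :
  va_module A V :=
  VAModule (va_bilinear A) (va_truncation A) (va_vacuum A) (@va_jacobi _ _ A).

Theorem mainTheorem9 (R : realType) (V : lmodType R[i])
    (A : vertex_algebra V) :
  [<-> (exists (W : lmodType R[i]) (M : va_module A W) (w : W),
          ~ in_gpos (mod_Y M) w);
       (exists v : V, ~ in_gpos (va_Y A) v);
       ~ in_gpos (va_Y A) (va_vac A)].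
Proof.
tfae.
- by move=> [W [M [w not_gpos_w]]]; exists (va_vac A) => /(in_gpos_of_vacuum M).
- by move=> [v not_gpos_v] /(in_gpos_of_vacuum (va_self_module A)).
- by move=> not_gpos_vac; exists V, (va_self_module A), (va_vac A).
Qed.
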